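(* Let $A$ and $B$ be automata. (1) If $B$ is deterministic and $A\le_B B$, then $A\le_R B$. (2) If all states of $A$ are reachable, $B$ has finite invisible nondeterminism, and $A\le_B B$, then $A\le_{iB}B$.
   Context: An automaton $A$ consists of a set $\mathrm{states}(A)$ of states, a nonempty set $\mathrm{start}(A)\subseteq\mathrm{states}(A)$ of start states, a set $\mathrm{acts}(A)$ of actions containing a distinguished internal action $\tau$, and a set $\mathrm{steps}(A)\subseteq\mathrm{states}(A)\times\mathrm{acts}(A)\times\mathrm{states}(A)$ of steps; write $s\xrightarrow{a}_A t$ for $(s,a,t)\in\mathrm{steps}(A)$. An execution fragment of $A$ is a finite or infinite alternating sequence $s_0a_1s_1a_2s_2\cdots$ of states and actions, beginning with a state and, if finite, ending with a state, such that $s_{i-1}\xrightarrow{a_i}_A s_i$ for all $i>0$. An execution is an execution fragment whose first state is a start state. A state is reachable if it is the last state of some finite execution. For states $s,t$ and a finite sequence $\beta$ of non-$\tau$ actions, write $s\stackrel{\beta}{\Rightarrow}_A t$ if $A$ has a finite execution fragment starting in $s$, with trace (subsequence of non-$\tau$ actions) $\beta$, ending in $t$. $A$ is deterministic if $|\mathrm{start}(A)|=1$ and for every state $s$ and finite sequence $\beta$ of non-$\tau$ actions there is at most one $t$ with $s\stackrel{\beta}{\Rightarrow}_A t$. $A$ has finite invisible nondeterminism if $\mathrm{start}(A)$ is finite and for every state $s$ and finite sequence $\beta$ of non-$\tau$ actions there are only finitely many $t$ with $s\stackrel{\beta}{\Rightarrow}_A t$. For a relation $R$ write $R[s]=\{u\mid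 (s,u)\in R\}$; $R$ is image-finite if every $R[s]$ is finite. A step refinement from $A$ to $B$ is a partial function $r:\mathrm{states}(A)\rightharpoonup\mathrm{states}(B)$ such that (1) if $s\in\mathrm{start}(A)$ then $s\in\mathrm{dom}(r)$ and $r(s)\in\mathrm{start}(B)$; (2) if $s\xrightarrow{a}_A t$ and $s\in\mathrm{dom}(r)$ then $t\in\mathrm{dom}(r)$ and either $r(s)=r(t)$ and $a=\tau$, or $r(s)\xrightarrow{a}_B r(t)$. Write $A\le_R B$ if one exists. A normed backward simulation from $A$ to $B$ is a pair $(b,n)$ where $b\subseteq\mathrm{states}(A)\times\mathrm{states}(B)$ is total (every $s\in\mathrm{states}(A)$ has $b[s]\neq\emptyset$) and $n:(\mathrm{steps}(A)\cup\mathrm{start}(A))\times\mathrm{states}(B)\to S$ for some set $S$ with a well-founded strict order $<$, such that: (1) if $s\in\mathrm{start}(A)$ and $u\in b[s]$ then (a) $u\in\mathrm{start}(B)$, or (b) there is $v\in b[s]$ with $v\xrightarrow{\tau}_B u$ and $n(s,v)<n(s,u)$; (2) if $t\xrightarrow{a}_A s$ and $u\in b[s]$ then (a) $u\in b[t]$ and $a=\tau$, or (b) there is $v\in b[t]$ with $v\xrightarrow{a}_B u$, or (c) there is $v\in b[s]$ with $v\xrightarrow{\tau}_B u$ and $n(t\xrightarrow{a}s,v)<n(t\xrightarrow{a}s,u)$. Write $A\le_B B$ if one exists and $A\le_{iB}B$ if one exists with $b$ image-finite. *)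

From Stdlib Require Import List.
Import ListNotations.


Record automaton (Act : Type) (tau : Act) := Automaton {
  state : Type;
  start : state -> Prop;
  acts  : Act -> Prop;
  step  : state -> Act -> state -> Prop;
  start_nonempty : exists s, start s;
  tau_in_acts : acts tau;
  step_acts : forall s a t, step s a t -> acts a
}.

Arguments state {Act tau} _.
Arguments start {Act tau} _ _.
Arguments acts {Act tau} _ _.
Arguments step {Act tau} _ _ _ _.

Section Defs.
Variables (Act : Type) (tau : Act).

Definition finite_pred (T : Type) (P : T -> Prop) : Prop :=
  exists l : list T, forall x, P x -> In x l.

(* A finite execution fragment s0 a1 s1 ... an sn is represented by its first
   state s0 and the list [(a1,s1); ...; (an,sn)]. *)
Fixpoint is_frag (A : automaton Act tau) (s0 : state A)
    (l : list (Act * state A)) : Prop :=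
  match l with
  | [] => True
  | (a, s1) :: l' => step A s0 a s1 /\ is_frag A s1 l'
  end.

Definition frag_last (A : automaton Act tau) (s0 : state A)
    (l : list (Act * state A)) : state A :=
  last (map snd l) s0.

Inductive trace_of {S : Type} : list (Act * S) -> list Act -> Prop :=
  | trace_nil : trace_of [] []
  | trace_tau : forall s l beta, trace_of l beta -> trace_of ((tau, s) :: l) beta
  | trace_vis : forall a s l beta, a <> tau ->
      trace_of l beta -> trace_of ((a, s) :: l) (a :: beta).

Definition weak (A : automaton Act tau) (s : state A) (beta : list Act)
    (t : state A) : Prop :=
  exists l, is_frag A s l /\ trace_of l beta /\ frag_last A s l = t.

Definition non_tau_seq (beta : list Act) : Prop := Forall (fun a => a <> tau) beta.

Definition reachable (A : automaton Act tau) (s : state A) : Prop :=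
  exists s0 l, start A s0 /\ is_frag A s0 l /\ frag_last A s0 l = s.

Definition deterministic (A : automaton Act tau) : Prop :=
  (exists s0, forall s, start A s <-> s = s0) /\
  forall s beta t1 t2, non_tau_seq beta ->
    weak A s beta t1 -> weak A s beta t2 -> t1 = t2.

Definition fin_invisible_nondet (A : automaton Act tau) : Prop :=
  finite_pred _ (start A) /\
  forall s beta, non_tau_seq beta -> finite_pred _ (fun t => weak A s beta t).

Definition step_refinement (A B : automaton Act tau)
    (r : state A -> option (state B)) : Prop :=
  (forall s, start A s -> exists u, r s = Some u /\ start B u) /\
  (forall s a t, step A s a t -> forall u, r s = Some u ->
     exists v, r t = Some v /\ ((u = v /\ a = tau) \/ step B u a v)).

Definition le_R (A B : automaton Act tau) : Prop :=
  exists r, step_refinement A B r.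

(* the domain steps(A) ∪ start(A) of the norm function *)
Inductive norm_dom (A : automaton Act tau) : Type :=
  | NStart : state A -> norm_dom A
  | NStep : state A -> Act -> state A -> norm_dom A.

Definition well_founded_strict_order (S : Type) (lt : S -> S -> Prop) : Prop :=
  well_founded lt /\ (forall x, ~ lt x x) /\
  (forall x y z, lt x y -> lt y z -> lt x z).

Definition normed_backward_sim (A B : automaton Act tau)
    (b : state A -> state B -> Prop)
    (S : Type) (lt : S -> S -> Prop) (n : norm_dom A -> state B -> S) : Prop :=
  well_founded_strict_order S lt /\
  (forall s, exists u, b s u) /\
  (forall s u, start A s -> b s u ->
     start B u \/
     (exists v, b s v /\ step B v tau u /\ lt (n (NStart A s) v) (n (NStart A s) u))) /\
  (forall t a s u, step A t a s -> b s u ->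
     (b t u /\ a = tau) \/
     (exists v, b t v /\ step B v a u) \/
     (exists v, b s v /\ step B v tau u /\
        lt (n (NStep A t a s) v) (n (NStep A t a s) u))).

Definition le_B (A B : automaton Act tau) : Prop :=
  exists b (S : Type) lt n, normed_backward_sim A B b S lt n.

Definition image_finite (A B : automaton Act tau)
    (b : state A -> state B -> Prop) : Prop :=
  forall s, finite_pred _ (b s).

Definition le_iB (A B : automaton Act tau) : Prop :=
  exists b (S : Type) lt n, normed_backward_sim A B b S lt n /\ image_finite A B b.

End Defs.

(* A normed backward simulation is sound for traces: if [s] is reached in [A]
   by a fragment with trace [beta] and [b s u], then [u] is reached in [B] from
   a start state by trace [beta].  This is proved by induction on the fragment
   reaching [s], with an inner well-founded induction on the norm for the
   clauses that step backwards along a [tau]-step of [B].  When [B] is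
   deterministic, all states related to a reachable [s] therefore coincide, so
   [b] restricted to reachable states is a partial function; it is a step
   refinement because the norm-decreasing clauses would now compare a state with
   itself.  When [B] has finite invisible nondeterminism, [b s] lies in the
   finite set of states weakly reachable from the finitely many start states. *)
From Stdlib Require Import List Wellfounded ClassicalEpsilon Classical.
Import ListNotations.

Section Fragments.
Variables (Act : Type) (tau : Act) (X : automaton Act tau).

Lemma last_cons (T : Type) (x d : T) (l : list T) : last (x :: l) d = last l x.
Proof.
  revert x d; induction l as [|y l IH]; intros x d; [reflexivity|].
  change (last (y :: l) d = last (y :: l) x). now rewrite !IH.
Qed.

Lemma frag_last_cons (s0 s1 : state X) a l :
  frag_last Act tau X s0 ((a, s1) :: l) = frag_last Act tau X s1 l.
Proof. apply last_cons. Qed.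

Lemma is_frag_app (s : state X) l1 l2 :
  is_frag Act tau X s l1 -> is_frag Act tau X (frag_last Act tau X s l1) l2 ->
  is_frag Act tau X s (l1 ++ l2).
Proof.
  revert s; induction l1 as [|[a s1] l1 IH]; intros s H1 H2; [exact H2|].
  destruct H1 as [Hs H1]. split; [exact Hs|].
  apply IH; [exact H1|]. now rewrite <- frag_last_cons with (s0 := s) (a := a).
Qed.

Lemma trace_of_app (S : Type) (l1 l2 : list (Act * S)) beta1 beta2 :
  trace_of Act tau l1 beta1 -> trace_of Act tau l2 beta2 ->
  trace_of Act tau (l1 ++ l2) (beta1 ++ beta2).
Proof. intros H1 H2; induction H1; simpl; [exact H2 | constructor; auto ..]. Qed.

Lemma weak_nil (u : state X) : weak Act tau X u [] u.
Proof. exists []; repeat split; constructor. Qed.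

Lemma weak_snoc (u v w : state X) a beta beta' :
  weak Act tau X u beta v -> step X v a w -> trace_of Act tau [(a, w)] beta' ->
  weak Act tau X u (beta ++ beta') w.
Proof.
  intros [l [Hf [Ht Hl]]] Hs Htr.
  exists (l ++ [(a, w)]); repeat split.
  - apply is_frag_app; [exact Hf|]. rewrite Hl. simpl; auto.
  - now apply trace_of_app.
  - unfold frag_last. rewrite map_app. apply last_last.
Qed.

Lemma weak_snoc_tau (u v w : state X) beta :
  weak Act tau X u beta v -> step X v tau w -> weak Act tau X u beta w.
Proof.
  intros H Hs. rewrite <- (app_nil_r beta).
  eapply weak_snoc; eauto. repeat constructor.
Qed.

Lemma weak_snoc_vis (u v w : state X) a beta :
  weak Act tau X u beta v -> step X v a w -> a <> tau ->
  weak Act tau X u (beta ++ [a]) w.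
Proof. intros H Hs Ha. eapply weak_snoc; eauto. repeat constructor; auto. Qed.

(* Reachability with a given trace, built by appending steps so that its
   induction principle follows the backward-simulation clauses. *)
Inductive reach_trace : state X -> list Act -> Prop :=
  | reach_start s : start X s -> reach_trace s []
  | reach_tau t s beta :
      reach_trace t beta -> step X t tau s -> reach_trace s beta
  | reach_vis t a s beta :
      reach_trace t beta -> step X t a s -> a <> tau -> reach_trace s (beta ++ [a]).

Lemma reach_trace_non_tau s beta : reach_trace s beta -> non_tau_seq Act tau beta.
Proof.
  unfold non_tau_seq; induction 1; auto.
  apply Forall_app; split; auto.
Qed.

Lemma reach_trace_step t a s beta :
  reach_trace t beta -> step X t a s -> exists beta', reach_trace s beta'.
Proof.
  intros H Hs. destruct (classic (a = tau)) as [->|Ha].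
  - exists beta; eapply reach_tau; eauto.
  - exists (beta ++ [a]); eapply reach_vis; eauto.
Qed.

Lemma reach_trace_frag_last l : forall t beta,
  reach_trace t beta -> is_frag Act tau X t l ->
  exists beta', reach_trace (frag_last Act tau X t l) beta'.
Proof.
  induction l as [|[a s] l IH]; intros t beta H Hf; [now exists beta|].
  destruct Hf as [Hs Hf]. rewrite frag_last_cons.
  destruct (reach_trace_step _ _ _ _ H Hs) as [beta' H'].
  eapply IH; eauto.
Qed.

Lemma reachable_reach_trace s :
  reachable Act tau X s -> exists beta, reach_trace s beta.
Proof.
  intros [s0 [l [H0 [Hf <-]]]].
  eapply reach_trace_frag_last; [apply reach_start, H0 | exact Hf].
Qed.

Definition weak_from_start (beta : list Act) (u : state X) : Prop :=
  exists u0, start X u0 /\ weak Act tau X u0 beta u.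

Lemma weak_from_start_tau beta v u :
  weak_from_start beta v -> step X v tau u -> weak_from_start beta u.
Proof. intros [u0 [H0 Hw]] Hs. exists u0; split; [exact H0|]. eapply weak_snoc_tau; eauto. Qed.

Lemma tau_descent (S : Type) (lt : S -> S -> Prop) (f : state X -> S)
    (R P : state X -> Prop) :
  well_founded lt ->
  (forall v u, P v -> step X v tau u -> P u) ->
  (forall u, R u -> P u \/ exists v, R v /\ step X v tau u /\ lt (f v) (f u)) ->
  forall u, R u -> P u.
Proof.
  intros wf Hclosed Hstep u.
  induction u as [u IH] using (well_founded_ind (wf_inverse_image _ _ lt f wf)).
  intros Hu. destruct (Hstep u Hu) as [HP|[v [Hv [Hvu Hlt]]]]; [exact HP|].
  exact (Hclosed v u (IH v Hlt Hv) Hvu).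
Qed.

End Fragments.

Arguments reach_trace {Act tau} X _ _.
Arguments reach_start {Act tau X s} _.
Arguments weak_from_start {Act tau} X _ _.

Section Soundness.
Variables (Act : Type) (tau : Act) (A B : automaton Act tau).
Variables (b : state A -> state B -> Prop) (S : Type) (lt : S -> S -> Prop).
Variable n : norm_dom Act tau A -> state B -> S.
Hypothesis sim : normed_backward_sim Act tau A B b S lt n.

Lemma nbs_weak_from_start s beta u :
  reach_trace A s beta -> b s u -> weak_from_start B beta u.
Proof.
  destruct sim as [[wf _] [_ [Hstart Hstep]]].
  intros Hr; revert u.
  induction Hr as [s Hs|t s beta Hr IH Hts|t a s beta Hr IH Hts Ha].
  - apply tau_descent with (lt := lt) (f := n (NStart Act tau A s)) (R := b s);
      [exact wf | apply weak_from_start_tau |].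
    intros u Hu. destruct (Hstart s u Hs Hu) as [Hu0|Hdesc]; [left|right; exact Hdesc].
    exists u; split; [exact Hu0 | apply weak_nil].
  - apply tau_descent with (lt := lt) (f := n (NStep Act tau A t tau s)) (R := b s);
      [exact wf | apply weak_from_start_tau |].
    intros u Hu.
    destruct (Hstep t tau s u Hts Hu) as [[Hu' _]|[[v [Hv Hvu]]|Hdesc]];
      [left; auto | left | right; exact Hdesc].
    eapply weak_from_start_tau; eauto.
  - apply tau_descent with (lt := lt) (f := n (NStep Act tau A t a s)) (R := b s);
      [exact wf | apply weak_from_start_tau |].
    intros u Hu.
    destruct (Hstep t a s u Hts Hu) as [[_ Hat]|[[v [Hv Hvu]]|Hdesc]];
      [contradiction | left | right; exact Hdesc].
    destruct (IH v Hv) as [u0 [H0 Hw]].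
    exists u0; split; [exact H0|]. eapply weak_snoc_vis; eauto.
Qed.

Section Deterministic.
Hypothesis det : deterministic Act tau B.

Lemma nbs_deterministic_functional s beta u v :
  reach_trace A s beta -> b s u -> b s v -> u = v.
Proof.
  intros Hr Hu Hv. destruct det as [[s0 Hs0] Hweak].
  destruct (nbs_weak_from_start s beta u Hr Hu) as [u0 [Hu0 Hwu]].
  destruct (nbs_weak_from_start s beta v Hr Hv) as [v0 [Hv0 Hwv]].
  apply Hs0 in Hu0; apply Hs0 in Hv0; subst u0 v0.
  eapply Hweak; eauto. eapply reach_trace_non_tau; eauto.
Qed.

Lemma nbs_no_descent_at_reachable s beta (d : norm_dom Act tau A) u :
  reach_trace A s beta -> b s u ->
  ~ exists v, b s v /\ step B v tau u /\ lt (n d v) (n d u).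
Proof.
  intros Hr Hu [v [Hv [_ Hlt]]].
  destruct sim as [[_ [irr _]] _].
  rewrite (nbs_deterministic_functional s beta v u Hr Hv Hu) in Hlt.
  exact (irr _ Hlt).
Qed.

Definition nbs_refinement (s : state A) : option (state B) :=
  match excluded_middle_informative (exists beta, reach_trace A s beta) with
  | left _ => Some (proj1_sig (constructive_indefinite_description _ (proj1 (proj2 sim) s)))
  | right _ => None
  end.

Lemma nbs_refinement_reachable s beta :
  reach_trace A s beta -> exists u, nbs_refinement s = Some u /\ b s u.
Proof.
  intros Hr. unfold nbs_refinement.
  destruct excluded_middle_informative as [_|Hn]; [|exfalso; eauto].
  eexists; split; [reflexivity|]. apply proj2_sig.
Qed.

Lemma nbs_refinement_Some s u :
  nbs_refinement s = Some u -> b s u /\ exists beta, reach_trace A s beta.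
Proof.
  unfold nbs_refinement.
  destruct excluded_middle_informative as [Hr|]; [|discriminate].
  intros [= <-]. split; [apply proj2_sig | exact Hr].
Qed.

Lemma nbs_refinement_step_refinement :
  step_refinement Act tau A B nbs_refinement.
Proof.
  destruct sim as [_ [_ [Hstart Hstep]]].
  split.
  - intros s Hs. pose proof (reach_start Hs) as Hr.
    destruct (nbs_refinement_reachable s [] Hr) as [u [Hru Hu]].
    exists u; split; [exact Hru|].
    destruct (Hstart s u Hs Hu) as [Hu0|Hdesc]; [exact Hu0|].
    exfalso; exact (nbs_no_descent_at_reachable s [] _ u Hr Hu Hdesc).
  - intros s a t Hst u Hru.
    destruct (nbs_refinement_Some s u Hru) as [Hu [beta Hr]].
    destruct (reach_trace_step Act tau A s a t beta Hr Hst) as [beta' Hr'].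
    destruct (nbs_refinement_reachable t beta' Hr') as [v [Hrv Hv]].
    exists v; split; [exact Hrv|].
    destruct (Hstep s a t v Hst Hv) as [[Hsv Ha]|[[w [Hw Hwv]]|Hdesc]].
    + left; split; [|exact Ha].
      exact (nbs_deterministic_functional s beta u v Hr Hu Hsv).
    + right. now rewrite (nbs_deterministic_functional s beta u w Hr Hu Hw).
    + exfalso; exact (nbs_no_descent_at_reachable t beta' _ v Hr' Hv Hdesc).
Qed.

End Deterministic.
End Soundness.

Lemma finite_pred_incl (T : Type) (P Q : T -> Prop) :
  finite_pred T P -> (forall x, Q x -> P x) -> finite_pred T Q.
Proof. intros [l Hl] HQ. exists l; auto. Qed.

Lemma finite_pred_union_list (I T : Type) (F : I -> T -> Prop) (L : list I) :
  (forall i, In i L -> finite_pred T (F i)) ->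
  finite_pred T (fun x => exists i, In i L /\ F i x).
Proof.
  induction L as [|i L IH]; intros HF.
  - exists []. intros x [i [[] _]].
  - destruct (HF i (or_introl eq_refl)) as [li Hli].
    destruct IH as [l Hl]; [intros j Hj; apply HF; now right|].
    exists (li ++ l). intros x [j [[<-|Hj] Hx]]; apply in_or_app; eauto.
Qed.

Lemma fin_invisible_nondet_weak_from_start (Act : Type) (tau : Act)
    (B : automaton Act tau) beta :
  fin_invisible_nondet Act tau B -> non_tau_seq Act tau beta ->
  finite_pred _ (weak_from_start B beta).
Proof.
  intros [[L0 HL0] Hfin] Hbeta.
  apply finite_pred_incl with
    (P := fun u => exists u0, In u0 L0 /\ weak Act tau B u0 beta u).
  - apply finite_pred_union_list. intros u0 _. exact (Hfin u0 beta Hbeta).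
  - intros u [u0 [H0 Hw]]. eauto.
Qed.

Theorem mainTheorem10 (Act : Type) (tau : Act) (A B : automaton Act tau) :
  (deterministic Act tau B -> le_B Act tau A B -> le_R Act tau A B) /\
  ((forall s : state A, reachable Act tau A s) -> fin_invisible_nondet Act tau B ->
     le_B Act tau A B -> le_iB Act tau A B).
Proof.
  split.
  - intros det [b [S [lt [n sim]]]].
    exists (nbs_refinement Act tau A B b S lt n sim).
    exact (nbs_refinement_step_refinement Act tau A B b S lt n sim det).
  - intros Hreach Hfin [b [S [lt [n sim]]]].
    exists b, S, lt, n; split; [exact sim|].
    intros s. destruct (reachable_reach_trace Act tau A s (Hreach s)) as [beta Hr].
    apply finite_pred_incl with (P := weak_from_start B beta).
    + apply fin_invisible_nondet_weak_from_start;
        [exact Hfin | eapply reach_trace_non_tau; eauto].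
    + intros u Hu. exact (nbs_weak_from_start Act tau A B b S lt n sim s beta u Hr Hu).
Qed.
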